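(* Let $\mathcal{S}$ be a temporal feedback graph on $T$ rounds with maximal orders $C_1,\dots,C_N$, and let $\boldsymbol\mu^*$ be an optimal solution to the upper bound dual program (maximize $\sum_t\mu_t$ s.t. $\sum_{t\in C_c}\mu_t^2\le1$ for all $c$, $\mu\ge0$). Then there exists an optimal solution $\boldsymbol\lambda^*$ to the upper bound program (minimize $\sum_{c}\sqrt{\sum_{t\in C_c}\lambda_{c,t}^2}$ s.t. $\sum_c\lambda_{c,t}=1$ for all $t$, $\lambda_{c,t}=0$ if $t\notin C_c$, $\lambda\ge0$) such that: for every $c\in[N]$ with $\sum_{t\in C_c}(\mu^*_t)^2<1$ we have $\lambda^*_{c,t}=0$ for all $t\in[T]$, and for every $c\in[N]$ with $\sum_{t\in C_c}(\mu^*_t)^2=1$ there is a constant $\rho_c$ with $\lambda^*_{c,t}=\rho_c\mu^*_t$ for all $t$ (in $C_c$).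
   Context: A temporal feedback graph $\mathcal{S}$ is a collection of subsets $S_t\subseteq[T]\setminus\{t\}$, $t\in[T]$. A sequence of rounds $t_1,\dots,t_w$ is an order if $t_u\in S_{t_v}$ for all $u<v$; it is maximal if no super-sequence of it is an order. *)

From HB Require Import structures.
From mathcomp Require Import all_boot all_order all_algebra.
From mathcomp Require Import reals.
Set Implicit Arguments. Unset Strict Implicit. Unset Printing Implicit Defensive.
Import Order.TTheory GRing.Theory Num.Theory.
Local Open Scope ring_scope.

Definition temporal_feedback_graph (T : nat) (S : 'I_T -> {set 'I_T}) : Prop :=
  forall t : 'I_T, t \notin S t.

Definition is_order (T : nat) (S : 'I_T -> {set 'I_T}) (s : seq 'I_T) : Prop :=
  pairwise (fun a b => a \in S b) s.

Definition maximal_order (T : nat) (S : 'I_T -> {set 'I_T}) (s : seq 'I_T) : Prop :=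
  is_order S s /\
  forall s' : seq 'I_T, is_order S s' -> subseq s s' -> s' = s.

Definition dual_feasible (R : realType) (T N : nat) (C : 'I_N -> seq 'I_T)
  (mu : 'I_T -> R) : Prop :=
  (forall t, 0 <= mu t) /\
  (forall c, \sum_(t : 'I_T | t \in C c) mu t ^+ 2 <= 1).

Definition dual_optimal (R : realType) (T N : nat) (C : 'I_N -> seq 'I_T)
  (mu : 'I_T -> R) : Prop :=
  dual_feasible C mu /\
  (forall mu' : 'I_T -> R, dual_feasible C mu' ->
     \sum_(t : 'I_T) mu' t <= \sum_(t : 'I_T) mu t).

Definition primal_feasible (R : realType) (T N : nat) (C : 'I_N -> seq 'I_T)
  (lam : 'I_N -> 'I_T -> R) : Prop :=
  (forall t, \sum_(c : 'I_N) lam c t = 1) /\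
  (forall c t, t \notin C c -> lam c t = 0) /\
  (forall c t, 0 <= lam c t).

Definition primal_obj (R : realType) (T N : nat) (C : 'I_N -> seq 'I_T)
  (lam : 'I_N -> 'I_T -> R) : R :=
  \sum_(c : 'I_N) Num.sqrt (\sum_(t : 'I_T | t \in C c) lam c t ^+ 2).

Definition primal_optimal (R : realType) (T N : nat) (C : 'I_N -> seq 'I_T)
  (lam : 'I_N -> 'I_T -> R) : Prop :=
  primal_feasible C lam /\
  (forall lam' : 'I_N -> 'I_T -> R, primal_feasible C lam' ->
     primal_obj C lam <= primal_obj C lam').

From HB Require Import structures.
From mathcomp Require Import all_boot all_order all_algebra.
From mathcomp Require Import reals.
From mathcomp Require Import ring lra.
From Stdlib Require Import Classical.
Set Implicit Arguments. Unset Strict Implicit. Unset Printing Implicit Defensive.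
Import Order.TTheory GRing.Theory Num.Theory.
Local Open Scope ring_scope.

(* Optimality of mu forbids first-order ascent: a direction y with
   sum_t y_t > 0 that does not increase, to first order, the load
   sum_{t in C_c} mu_t^2 of any tight order c gives a better dual point (move
   to mu + eps y, truncate at 0 and divide by 1 + O(eps^2)).  By Farkas' lemma
   the all-ones vector is then a nonnegative combination sum_c rho_c a_c of the
   vectors a_c = mu restricted to the tight orders C_c.  The primal point
   lambda_{c,t} = rho_c a_{c,t} is feasible, and for it the Cauchy-Schwarz
   inequality behind weak duality is an equality, so its objective is
   sum_t mu_t and it is optimal. *)

Section ConicFarkas.
Variables (R : realFieldType) (n : nat).
Implicit Types (y v w b : 'I_n -> R) (k l : R).

Definition dot y v := \sum_t y t * v t.

Lemma dotC y v : dot y v = dot v y.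
Proof. by apply: eq_bigr => t _; rewrite mulrC. Qed.

Lemma dot_subZl y w v k : dot (fun t => y t - k * w t) v = dot y v - k * dot w v.
Proof. by rewrite /dot mulr_sumr -sumrB; apply: eq_bigr => t _; ring. Qed.

Lemma dot_subZr y v w k l :
  dot y (fun t => k * v t - l * w t) = k * dot y v - l * dot y w.
Proof. by rewrite /dot !mulr_sumr -sumrB; apply: eq_bigr => t _; ring. Qed.

Lemma dot_self_le0 v : dot v v <= 0 -> forall t, v t = 0.
Proof.
move=> vv_le0 t; apply/eqP; rewrite -sqrf_eq0; apply/eqP.
apply: (psumr_eq0P (P := predT) (fun i _ => sqr_ge0 (v i))) => //.
by apply/eqP; rewrite eq_le vv_le0 sumr_ge0 // => i _; apply: sqr_ge0.
Qed.

Definition in_cone m (a : 'I_m -> 'I_n -> R) b :=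
  exists2 rho : 'I_m -> R, forall i, 0 <= rho i & forall t, b t = \sum_i rho i * a i t.

Lemma in_cone_recl m (a : 'I_m.+1 -> 'I_n -> R) b (r0 : R) (rho : 'I_m -> R) :
  0 <= r0 -> (forall j, 0 <= rho j) ->
  (forall t, b t = r0 * a ord0 t + \sum_(j < m) rho j * a (lift ord0 j) t) ->
  in_cone a b.
Proof.
move=> r0_ge0 rho_ge0 Eb.
exists (fun i => if unlift ord0 i is Some j then rho j else r0).
  by move=> i; case: unliftP.
move=> t; rewrite big_ord_recl unlift_none Eb; congr (_ + _).
by apply: eq_bigr => j _; rewrite liftK.
Qed.

(* [proj_along y' a0 v] is [dot y' a0] times the projection of [v] along [a0]
   onto the hyperplane orthogonal to [y']. *)
Definition proj_along y' a0 v t := dot y' a0 * v t - dot y' v * a0 t.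

Lemma dot_proj y y' a0 v : dot y' a0 != 0 ->
  dot y (proj_along y' a0 v)
  = dot (fun t => y t - dot y a0 / dot y' a0 * y' t) v * dot y' a0.
Proof. by move=> nz; rewrite dot_subZr dot_subZl [dot y' v]dotC; field. Qed.

Lemma in_cone_of_proj m (a : 'I_m.+1 -> 'I_n -> R) b y' :
  0 < dot y' (a ord0) -> 0 < dot y' b ->
  (forall j, dot y' (a (lift ord0 j)) <= 0) ->
  in_cone (fun j : 'I_m => proj_along y' (a ord0) (a (lift ord0 j)))
          (proj_along y' (a ord0) b) ->
  in_cone a b.
Proof.
set a0 := a ord0; set al := dot y' a0 => al_gt0 y'b_gt0 y'a_le0 [rho rho_ge0 Eb].
pose S1 t := \sum_j rho j * a (lift ord0 j) t.
pose S2 := \sum_j rho j * dot y' (a (lift ord0 j)).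
have S2_le0 : S2 <= 0 by apply: sumr_le0 => j _; apply: mulr_ge0_le0.
apply: (in_cone_recl (r0 := (dot y' b - S2) / al) _ rho_ge0).
  by apply: divr_ge0; [rewrite subr_ge0 (le_trans S2_le0) ?ltW | exact: ltW].
move=> t; have := Eb t; rewrite /proj_along -/(S1 t).
have -> : \sum_j rho j * (al * a (lift ord0 j) t - dot y' (a (lift ord0 j)) * a0 t)
          = al * S1 t - S2 * a0 t.
  by rewrite mulr_sumr mulr_suml -sumrB; apply: eq_bigr => j _; ring.
have al_nz : al != 0 by rewrite gt_eqF.
move=> Ebt.
have -> : b t = (al * b t - dot y' b * a0 t + dot y' b * a0 t) / al by field.
by rewrite Ebt -/a0; field.
Qed.

Lemma farkas m (a : 'I_m -> 'I_n -> R) b :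
  (forall y, (forall i, dot y (a i) <= 0) -> dot y b <= 0) -> in_cone a b.
Proof.
elim: m a b => [|m IH] a b ab_dual.
  exists (fun=> 0) => [//|t]; rewrite big_ord0.
  by apply: dot_self_le0; apply: ab_dual => -[].
set a0 := a ord0.
have [[rho rho_ge0 Eb]|not_cone] := classic (in_cone (fun j => a (lift ord0 j)) b).
  by apply: (in_cone_recl (lexx 0) rho_ge0) => t; rewrite mul0r add0r.
have [y' y'a_le0 y'b_gt0] :
    exists2 y', forall j, dot y' (a (lift ord0 j)) <= 0 & 0 < dot y' b.
  apply: NNPP => no_sep; apply/not_cone/IH => y ya_le0.
  by rewrite leNgt; apply/negP => yb_gt0; apply: no_sep; exists y.
have y'a0_gt0 : 0 < dot y' a0.
  rewrite ltNge; apply/negP => y'a0_le0; move: y'b_gt0; rewrite ltNge ab_dual //.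
  by move=> i; case: (unliftP ord0 i) => [j ->|->].
apply: (in_cone_of_proj y'a0_gt0 y'b_gt0 y'a_le0); apply: IH => y2 y2a_le0.
have nz : dot y' a0 != 0 by rewrite gt_eqF.
rewrite dot_proj // pmulr_lle0 //; apply: ab_dual => i.
rewrite -(pmulr_lle0 _ y'a0_gt0) -dot_proj //.
case: (unliftP ord0 i) => [j ->|->]; first exact: y2a_le0.
by rewrite /dot big1 // => t _; rewrite /proj_along subrr mulr0.
Qed.

End ConicFarkas.

Section SqrtSums.
Variables (R : rcfType) (I : finType) (P : pred I).
Implicit Types (l m : I -> R).

Lemma sum_mul_le_sqrt l m : \sum_(i | P i) m i ^+ 2 <= 1 ->
  \sum_(i | P i) l i * m i <= Num.sqrt (\sum_(i | P i) l i ^+ 2).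
Proof.
move=> m_le1; set L := Num.sqrt _.
have L_ge0 : 0 <= L := sqrtr_ge0 _.
have L2 : L ^+ 2 = \sum_(i | P i) l i ^+ 2.
  by rewrite sqr_sqrtr //; apply: sumr_ge0 => i _; apply: sqr_ge0.
have [L0|L_neq0] := eqVneq L 0.
  have l2_0 : \sum_(i | P i) l i ^+ 2 = 0 by rewrite -L2 L0 expr0n.
  rewrite big1 // => i Pi.
  have /eqP := psumr_eq0P (fun i _ => sqr_ge0 (l i)) l2_0 Pi.
  by rewrite sqrf_eq0 => /eqP ->; rewrite mul0r.
have L_gt0 : 0 < L by rewrite lt_def L_neq0.
(* AM-GM: [2 L l m <= l^2 + L^2 m^2] *)
have amgm : \sum_(i | P i) 2 * L * (l i * m i)
            <= \sum_(i | P i) (l i ^+ 2 + L ^+ 2 * m i ^+ 2).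
  by apply: ler_sum => i _; have := sqr_ge0 (l i - L * m i); nra.
rewrite -mulr_sumr big_split /= -mulr_sumr -L2 in amgm.
nra.
Qed.

Lemma sqrt_sum_sqr_scale rho m : 0 <= rho -> \sum_(i | P i) m i ^+ 2 = 1 ->
  Num.sqrt (\sum_(i | P i) (rho * m i) ^+ 2) = \sum_(i | P i) rho * m i * m i.
Proof.
move=> rho_ge0 m_eq1.
have -> : \sum_(i | P i) (rho * m i) ^+ 2 = rho ^+ 2.
  by rewrite -[RHS]mulr1 -m_eq1 mulr_sumr; apply: eq_bigr => i _; rewrite exprMn.
rewrite sqrtr_sqr ger0_norm // -[LHS]mulr1 -m_eq1 mulr_sumr.
by apply: eq_bigr => i _; rewrite -mulrA.
Qed.

End SqrtSums.

Lemma small_step_le1 (R : realFieldType) (s p : R) : s <= 1 -> (s = 1 -> p <= 0) ->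
  exists2 e, 0 < e & forall eps, 0 <= eps <= e -> s + eps * p <= 1.
Proof.
move=> s_le1 tight_p; have [s1|s_neq1] := eqVneq s 1.
  exists 1 => // eps /andP[eps_ge0 _].
  by rewrite s1 gerDl mulr_ge0_le0 ?tight_p.
have s_lt1 : s < 1 by rewrite lt_neqAle s_neq1.
have p1_gt0 : 0 < `|p| + 1 by rewrite ltr_wpDl.
exists ((1 - s) / (`|p| + 1)) => [|eps /andP[eps_ge0]].
  by rewrite divr_gt0 ?subr_gt0.
rewrite ler_pdivlMr // => eps_le.
have := ler_norm p; have := normr_ge0 p; nra.
Qed.

Lemma sqr_max0_le (R : realDomainType) (x : R) : Num.max x 0 ^+ 2 <= x ^+ 2.
Proof.
by case: (leP x 0) => _; rewrite ?lexx // expr0n sqr_ge0.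
Qed.

Section UpperBoundPrograms.
Variables (R : realType) (T N : nat) (C : 'I_N -> seq 'I_T).
Implicit Types (mu nu y : 'I_T -> R) (lam : 'I_N -> 'I_T -> R).

Definition load mu c := \sum_(t | t \in C c) mu t ^+ 2.

Lemma primal_feasible_sum lam mu : primal_feasible C lam ->
  \sum_t mu t = \sum_c \sum_(t | t \in C c) lam c t * mu t.
Proof.
case=> lam_sum1 [lam_out _].
transitivity (\sum_c \sum_t lam c t * mu t).
  by rewrite exchange_big; apply: eq_bigr => t _; rewrite -mulr_suml lam_sum1 mul1r.
apply: eq_bigr => c _; rewrite [RHS]big_mkcond; apply: eq_bigr => t _.
by case: ifPn => // /lam_out ->; rewrite mul0r.
Qed.

Lemma weak_duality mu lam : dual_feasible C mu -> primal_feasible C lam ->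
  \sum_t mu t <= primal_obj C lam.
Proof.
move=> [_ mu_le1] lam_feas; rewrite (primal_feasible_sum mu lam_feas).
by apply: ler_sum => c _; apply: sum_mul_le_sqrt.
Qed.

Lemma primal_optimal_of_aligned mu lam : dual_feasible C mu -> primal_feasible C lam ->
  (forall c, Num.sqrt (\sum_(t | t \in C c) lam c t ^+ 2)
             = \sum_(t | t \in C c) lam c t * mu t) ->
  primal_optimal C lam.
Proof.
move=> mu_feas lam_feas aligned; split=> // lam' lam'_feas.
rewrite /primal_obj (eq_bigr _ (fun c _ => aligned c)) -primal_feasible_sum //.
exact: weak_duality.
Qed.

Lemma dual_feasible_scale nu d : (forall t, 0 <= nu t) -> 1 <= d ->
  (forall c, load nu c <= d) -> dual_feasible C (fun t => nu t / d).
Proof.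
move=> nu_ge0 d_ge1 load_le; have d_gt0 : 0 < d := lt_le_trans ltr01 d_ge1.
split=> [t|c]; first by rewrite divr_ge0 // ltW.
have -> : \sum_(t | t \in C c) (nu t / d) ^+ 2 = load nu c / d ^+ 2.
  by rewrite /load mulr_suml; apply: eq_bigr => t _; rewrite expr_div_n.
rewrite ler_pdivrMr ?exprn_gt0 // mul1r (le_trans (load_le c)) //.
by rewrite expr2 ler_peMl // ltW.
Qed.

Lemma dual_optimal_no_ascent mu y : dual_optimal C mu ->
  (forall c, load mu c = 1 -> \sum_(t | t \in C c) mu t * y t <= 0) ->
  \sum_t y t <= 0.
Proof.
move=> [[mu_ge0 load_le1] mu_max] y_tight; rewrite leNgt; apply/negP => Y_gt0.
set Y := \sum_t y t in Y_gt0.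
pose M := \sum_t mu t; pose K := 1 + \sum_t y t ^+ 2.
have M_ge0 : 0 <= M by apply: sumr_ge0.
have K_ge1 : 1 <= K by rewrite lerDl sumr_ge0 // => t _; apply: sqr_ge0.
pose p c := 2 * \sum_(t | t \in C c) mu t * y t.
have /fin_all_exists2[e e_gt0 e_step] : forall c, exists2 e : R, 0 < e &
    forall eps, 0 <= eps <= e -> load mu c + eps * p c <= 1.
  by move=> c; apply: small_step_le1 (load_le1 c) _ => /y_tight; rewrite /p pmulr_rle0.
pose eps := \big[Num.min/(Y / (K * M + 1))]_c e c.
have eps_gt0 : 0 < eps by apply: lt_bigmin => [|c _]; rewrite ?divr_gt0 ?e_gt0 //; nra.
have eps_range c : 0 <= eps <= e c by rewrite ltW //; exact: bigmin_le.
have eps_le : eps <= Y / (K * M + 1) by exact: bigmin_le_id.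
pose nu t := Num.max (mu t + eps * y t) 0.
pose d := 1 + eps ^+ 2 * K.
have d_ge1 : 1 <= d by rewrite lerDl mulr_ge0 ?sqr_ge0 // (le_trans ler01).
have nu_load c : load nu c <= d.
  have expand : \sum_(t | t \in C c) (mu t + eps * y t) ^+ 2
      = load mu c + eps * p c + eps ^+ 2 * \sum_(t | t \in C c) y t ^+ 2.
    by rewrite /load /p !mulr_sumr -!big_split; apply: eq_bigr => t _ /=; ring.
  have q_le : \sum_(t | t \in C c) y t ^+ 2 <= K.
    rewrite /K big_mkcond ler_wpDl //=; apply: ler_sum => t _.
    by case: ifP => // _; apply: sqr_ge0.
  apply: le_trans (ler_sum _ (fun t _ => sqr_max0_le _)) _.
  rewrite expand; have := e_step c eps (eps_range c).
  by rewrite /d; have := ler_wpM2l (sqr_ge0 eps) q_le; lra.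
have nu_feas : dual_feasible C (fun t => nu t / d).
  by apply: dual_feasible_scale => // t; rewrite le_max lexx orbT.
have := mu_max _ nu_feas; apply/negP; rewrite -ltNge -mulr_suml.
rewrite ltr_pdivlMr ?(lt_le_trans ltr01) //.
apply: (@lt_le_trans _ _ (M + eps * Y)).
  have : eps * (K * M + 1) <= Y.
    by rewrite -ler_pdivlMr // ltr_wpDl // mulr_ge0 // (le_trans ler01).
  move=> /(ler_wpM2l (ltW eps_gt0)); have := mulr_gt0 eps_gt0 eps_gt0.
  by rewrite -/M /d; nra.
rewrite /M /Y mulr_sumr -big_split /=; apply: ler_sum => t _.
by rewrite le_max lexx.
Qed.

Definition active mu c t := if (load mu c == 1) && (t \in C c) then mu t else 0.

Lemma active_cone mu : dual_optimal C mu -> in_cone (active mu) (fun=> 1).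
Proof.
move=> mu_opt; apply: farkas => y y_active.
have -> : dot y (fun=> 1) = \sum_t y t by apply: eq_bigr => t _; rewrite mulr1.
apply: (dual_optimal_no_ascent mu_opt) => c tight; apply: le_trans (y_active c).
rewrite /dot /active tight eqxx [leLHS]big_mkcond /=; apply: ler_sum => t _.
by case: ifP => _; rewrite ?mulr0 // mulrC.
Qed.

Lemma active_primal_feasible mu (rho : 'I_N -> R) :
  dual_feasible C mu -> (forall c, 0 <= rho c) ->
  (forall t, 1 = \sum_c rho c * active mu c t) ->
  primal_feasible C (fun c t => rho c * active mu c t).
Proof.
move=> [mu_ge0 _] rho_ge0 rho_cover; split; first by move=> t; rewrite -rho_cover.
split=> [c t /negbTE t_out | c t]; first by rewrite /active t_out andbF mulr0.
by rewrite /active; case: ifP => _; rewrite mulr_ge0.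
Qed.

Lemma active_aligned mu (r : R) c : 0 <= r ->
  Num.sqrt (\sum_(t | t \in C c) (r * active mu c t) ^+ 2)
  = \sum_(t | t \in C c) r * active mu c t * mu t.
Proof.
move=> r_ge0; have [tight|slack] := eqVneq (load mu c) 1.
  have act t : t \in C c -> active mu c t = mu t by rewrite /active tight eqxx => ->.
  rewrite (eq_bigr (fun t => (r * mu t) ^+ 2)) => [|t /act -> //].
  rewrite [RHS](eq_bigr (fun t => r * mu t * mu t)) => [|t /act -> //].
  exact: sqrt_sum_sqr_scale.
have act t : active mu c t = 0 by rewrite /active (negbTE slack).
by rewrite !big1 ?sqrtr0 // => t _; rewrite act ?mulr0 ?mul0r // expr0n.
Qed.

End UpperBoundPrograms.

Theorem lemma3 (R : realType) (T : nat) (S : 'I_T -> {set 'I_T})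
  (N : nat) (C : 'I_N -> seq 'I_T)
  (HS : temporal_feedback_graph S)
  (HCinj : injective C)
  (HCall : forall s : seq 'I_T, maximal_order S s <-> exists c : 'I_N, C c = s)
  (mu : 'I_T -> R) (Hmu : dual_optimal C mu) :
  exists lam : 'I_N -> 'I_T -> R,
    primal_optimal C lam /\
    (forall c : 'I_N,
       \sum_(t : 'I_T | t \in C c) mu t ^+ 2 < 1 -> forall t : 'I_T, lam c t = 0) /\
    (forall c : 'I_N,
       \sum_(t : 'I_T | t \in C c) mu t ^+ 2 = 1 ->
       exists rho : R, forall t : 'I_T, t \in C c -> lam c t = rho * mu t).
Proof.
have [mu_feas _] := Hmu.
have [rho rho_ge0 rho_cover] := active_cone Hmu.
have lam_feas := active_primal_feasible mu_feas rho_ge0 rho_cover.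
exists (fun c t => rho c * active C mu c t); split; [|split].
- apply: (primal_optimal_of_aligned mu_feas lam_feas) => c.
  exact: active_aligned.
- by move=> c /lt_eqF slack t; rewrite /active /load slack mulr0.
- move=> c tight; exists (rho c) => t t_in.
  by rewrite /active /load tight eqxx t_in.
Qed.
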